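(* Let $\mathbb{K}$ be an algebraically closed field of characteristic zero, $\mathcal{C}\subset\mathbb{K}^2$ an affine irreducible plane curve, $A=(a,b)\in\mathbb{K}^2$, $d\in\mathbb{K}\setminus\{0\}$, and assume that $\mathcal{C}_0\neq\emptyset$ and that $\mathcal{C}$ is not a circle centered at $A$. Then $\mathfrak{C}(\mathcal{C},A,d)$ is irreducible and special if and only if $\mathcal{C}$ is a line passing through $A$.
   Context: For $\mathcal{C}$ defined by an irreducible polynomial $f(y_1,y_2)$: $\mathfrak{B}(\mathcal{C},A,d)\subset\mathbb{K}^2\times\mathbb{K}^2\times\mathbb{K}$ is the set of $(\bar x,\bar y,w)$ with $f(y_1,y_2)=0$, $(x_1-y_1)^2+(x_2-y_2)^2=d^2$, $(y_2-b)(x_1-y_1)-(y_1-a)(x_2-y_2)=0$, $w((y_1-a)^2+(y_2-b)^2)=1$; $\pi_1,\pi_2$ are the projections $(\bar x,\bar y,w)\mapsto\bar x$, $\mapsto\bar y$; the conchoid $\mathfrak{C}(\mathcal{C},A,d)$ is the Zariski closure of $\pi_1(\mathfrak{B}(\mathcal{C},A,d))$. $\mathcal{C}_0=\{(p_1,p_2)\in\mathcal{C}:(p_1-a)^2+(p_2-b)^2\neq0\}$. An irreducible component $\mathcal{M}$ of $\mathfrak{C}(\mathcal{C},A,d)$ is simple if there is a non-empty Zariski dense $\Omega\subset\mathcal{M}$ with $\mathrm{Card}(\pi_2(\pi_1^{-1}(Q)))=1$ for all $Q\in\Omega$; otherwise special. A circle centered at $A$ of radius $r$ is $(y_1-a)^2+(y_2-b)^2=r^2$.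 *)

From HB Require Import structures.
From mathcomp Require Import all_boot all_order all_algebra.
Set Implicit Arguments. Unset Strict Implicit. Unset Printing Implicit Defensive.
Import Order.TTheory GRing.Theory Num.Theory.
Local Open Scope ring_scope.

Section Conchoid.
Variable K : closedFieldType.

Definition pt := (K * K)%type.

(* evaluation of a bivariate polynomial g(y1,y2) at p = (p.1, p.2):
   inner variable = y1, outer variable = y2 *)
Definition ev2 (g : {poly {poly K}}) (p : pt) : K := (g.[p.2%:P]).[p.1].

Definition irreducible_elt (g : {poly {poly K}}) : Prop :=
  g != 0 /\ g \isn't a GRing.unit /\
  forall q r : {poly {poly K}}, g = q * r -> q \is a GRing.unit \/ r \is a GRing.unit.

Definition subset_pt (S T : pt -> Prop) := forall p, S p -> T p.

Definition zcl (S : pt -> Prop) : pt -> Prop :=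
  fun p => forall g, (forall q, S q -> ev2 g q = 0) -> ev2 g p = 0.

Definition zclosed (S : pt -> Prop) : Prop := subset_pt (zcl S) S.

Definition irreducible_set (X : pt -> Prop) : Prop :=
  zclosed X /\ (exists p, X p) /\
  forall Z1 Z2, zclosed Z1 -> zclosed Z2 ->
    (forall p, X p -> Z1 p \/ Z2 p) -> subset_pt X Z1 \/ subset_pt X Z2.

Definition irr_component (M X : pt -> Prop) : Prop :=
  irreducible_set M /\ subset_pt M X /\
  forall N, irreducible_set N -> subset_pt M N -> subset_pt N X -> subset_pt N M.

Definition Bset (f : {poly {poly K}}) (a b d : K) (x y : pt) (w : K) : Prop :=
  ev2 f y = 0 /\
  (x.1 - y.1) ^+ 2 + (x.2 - y.2) ^+ 2 = d ^+ 2 /\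
  (y.2 - b) * (x.1 - y.1) - (y.1 - a) * (x.2 - y.2) = 0 /\
  w * ((y.1 - a) ^+ 2 + (y.2 - b) ^+ 2) = 1.

Definition conchoid f a b d : pt -> Prop :=
  zcl (fun x => exists y w, Bset f a b d x y w).

Definition fiber f a b d (Q : pt) : pt -> Prop :=
  fun y => exists w, Bset f a b d Q y w.

Definition simple_component f a b d (M : pt -> Prop) : Prop :=
  irr_component M (conchoid f a b d) /\
  exists Om : pt -> Prop,
    subset_pt Om M /\ (exists Q, Om Q) /\ subset_pt M (zcl Om) /\
    forall Q, Om Q -> exists y, fiber f a b d Q y /\
                        forall y', fiber f a b d Q y' -> y' = y.

Definition special_component f a b d (M : pt -> Prop) : Prop :=
  irr_component M (conchoid f a b d) /\ ~ simple_component f a b d M.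

Definition curve (f : {poly {poly K}}) : pt -> Prop := fun p => ev2 f p = 0.

Definition C0 f (a b : K) : pt -> Prop :=
  fun p => curve f p /\ (p.1 - a) ^+ 2 + (p.2 - b) ^+ 2 != 0.

Definition is_circle_centered f (a b : K) : Prop :=
  exists r : K, forall p, curve f p <-> (p.1 - a) ^+ 2 + (p.2 - b) ^+ 2 = r ^+ 2.

Definition is_line_through f (a b : K) : Prop :=
  exists al be ga : K, (al != 0 \/ be != 0) /\ al * a + be * b + ga = 0 /\
    forall p, curve f p <-> al * p.1 + be * p.2 + ga = 0.

End Conchoid.

From mathcomp Require Import all_boot all_order all_algebra.
From mathcomp Require Import ring.
From Stdlib Require Import Classical.
Import GRing.Theory.
Set Implicit Arguments. Unset Strict Implicit. Unset Printing Implicit Defensive.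
Local Open Scope ring_scope.

(* A point Q of the conchoid has at most the two preimages Q + s d (Q - A) with
   s = 1/mu or s = -1/mu, where mu ^+ 2 = |Q - A| ^+ 2, and at least one of them lies
   on C.  The sum of f at these two points is twice the even part of
   s |-> f (Q + s d (Q - A)) evaluated at s ^+ 2 = 1 / |Q - A| ^+ 2; clearing
   denominators makes it a polynomial G in Q.  If G does not vanish on the conchoid,
   the points where it is nonzero have a single preimage and, the conchoid being
   irreducible, are dense: the conchoid is simple.  Otherwise, whenever A + l v lies
   on C (v a unit vector, l and l + d nonzero), the point A + (l + d) v has both its
   preimages on C, so A + (l + 2 d) v lies on C; C then meets a line through A in
   infinitely many points and, being irreducible, is that line.  Conversely, the
   conchoid of a line through A is the line itself, hence irreducible; its points
   A + mu v with mu <> d, -d have the two preimages A + (mu - d) v and A + (mu + d) v,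
   so ((Q - A) . v) ^+ 2 - d ^+ 2 vanishes wherever the preimage is unique but not
   at A, and the conchoid is special. *)

Section PolynomialEvaluation.
Variable K : closedFieldType.
Implicit Types (g : {poly {poly K}}) (p : pt K).

Lemma ev2D g (h : {poly {poly K}}) p : ev2 (g + h) p = ev2 g p + ev2 h p.
Proof. by rewrite /ev2 !hornerD. Qed.

Lemma ev2M g (h : {poly {poly K}}) p : ev2 (g * h) p = ev2 g p * ev2 h p.
Proof. by rewrite /ev2 !hornerM. Qed.

Lemma ev2C (c : K) p : ev2 c%:P%:P p = c.
Proof. by rewrite /ev2 !hornerC. Qed.

Lemma ev2MXaddC g (c : {poly K}) p : ev2 (g * 'X + c%:P) p = ev2 g p * p.2 + c.[p.1].
Proof. by rewrite /ev2 hornerMXaddC hornerD hornerM !hornerC. Qed.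

Lemma ev2_unit_neq0 g p : g \is a GRing.unit -> ev2 g p != 0.
Proof.
move=> gU; apply/eqP => g0; have := ev2M g g^-1 p.
by rewrite mulrV // g0 mul0r /ev2 !hornerC => /eqP; rewrite oner_eq0.
Qed.

Lemma ev2_graph g (c : {poly K}) t : ev2 g (t, c.[t]) = (g.[c]).[t].
Proof.
elim/poly_ind: g => [|g k IH]; first by rewrite /ev2 !horner0.
by rewrite ev2MXaddC hornerMXaddC hornerD hornerM IH.
Qed.

Lemma ev2_along g (x y : {poly K}) :
  exists r : {poly K}, forall t, ev2 g (x.[t], y.[t]) = r.[t].
Proof.
elim/poly_ind: g => [|g c [r hr]]; first by exists 0 => t; rewrite /ev2 !horner0.
by exists (r * y + (c \Po x)) => t; rewrite ev2MXaddC hr hornerD hornerM horner_comp.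
Qed.

Definition poly_fun (h : pt K -> K) := exists g, forall p, h p = ev2 g p.

Lemma poly_fun_const c : poly_fun (fun _ => c).
Proof. by exists c%:P%:P => p; rewrite ev2C. Qed.

Lemma poly_fun_fst : poly_fun (fun p => p.1).
Proof. by exists 'X%:P => p; rewrite /ev2 hornerC hornerX. Qed.

Lemma poly_fun_snd : poly_fun (fun p => p.2).
Proof. by exists 'X => p; rewrite /ev2 hornerX hornerC. Qed.

Lemma poly_fun_add h1 h2 : poly_fun h1 -> poly_fun h2 -> poly_fun (fun p => h1 p + h2 p).
Proof. by move=> [g1 e1] [g2 e2]; exists (g1 + g2) => p; rewrite ev2D e1 e2. Qed.

Lemma poly_fun_mul h1 h2 : poly_fun h1 -> poly_fun h2 -> poly_fun (fun p => h1 p * h2 p).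
Proof. by move=> [g1 e1] [g2 e2]; exists (g1 * g2) => p; rewrite ev2M e1 e2. Qed.

Lemma poly_fun_exp h n : poly_fun h -> poly_fun (fun p => h p ^+ n).
Proof.
move=> [g e]; exists (g ^+ n) => p; elim: n => [|n IH]; first by rewrite !expr0 /ev2 !hornerC.
by rewrite !exprS ev2M -IH -e.
Qed.

End PolynomialEvaluation.

Lemma poly_eq0_of_inj_roots (R : idomainType) (r : {poly R}) (z : nat -> R) :
  injective z -> (forall k, r.[z k] = 0) -> r = 0.
Proof.
move=> zI rz; apply/eqP; apply: contraT => r_neq0.
have rootsP : all (root r) (map z (iota 0 (size r))).
  by apply/allP => _ /mapP [k _ ->]; apply/rootP.
have := max_poly_roots r_neq0 rootsP; rewrite map_inj_uniq ?iota_uniq //.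
by rewrite size_map size_iota ltnn => /(_ isT).
Qed.

Lemma exists_sqrt (K : closedFieldType) (x : K) : exists m : K, m ^+ 2 = x.
Proof.
have /closed_rootP [m /rootP] : size ('X^2 - x%:P) != 1 by rewrite size_XnsubC.
by rewrite hornerD hornerN hornerC hornerXn => /eqP; rewrite subr_eq0 => /eqP; exists m.
Qed.

Section CharacteristicZero.
Variable K : fieldType.
Hypothesis K0 : [pchar K] =i pred0.

Lemma natr_inj : injective (fun n : nat => n%:R : K).
Proof.
suff le_eq m n : (m <= n)%N -> m%:R = n%:R :> K -> m = n.
  by move=> m n /= e; case: (leqP m n) => [/le_eq|/ltnW/le_eq]; [apply | move/(_ (esym e))].
move=> le_mn; rewrite -(subnKC le_mn) natrD -{1}[m%:R]addr0 => /addrI /esym/eqP.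
by rewrite ((pcharf0P K).1 K0) => /eqP ->; rewrite addn0.
Qed.

Lemma two_neq0 : (2 : K) != 0.
Proof. by rewrite ((pcharf0P K).1 K0). Qed.

Lemma nat_shift_neq0 (nu d : K) : nu != 0 -> d != 0 ->
  (forall m : nat, nu + m%:R * d != 0) \/ (forall m : nat, - nu + m%:R * d != 0).
Proof.
move=> nu0 d0; case: (classic (exists m0 : nat, nu + m0%:R * d = 0)) => [[m0 e0]|]; last first.
  by move=> no_m0; left => m; apply/eqP => e; apply: no_m0; exists m.
right => m; apply/eqP => e.
have : (m + m0)%:R * d = (- nu + m%:R * d) + (nu + m0%:R * d) by rewrite natrD; ring.
rewrite e e0 addr0 => /eqP; rewrite mulf_eq0 (negbTE d0) orbF ((pcharf0P K).1 K0).
rewrite addn_eq0 => /andP[_ /eqP m00].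
by move: e0; rewrite m00 mul0r addr0 => /eqP; rewrite (negbTE nu0).
Qed.

End CharacteristicZero.

Lemma parallel_multiple (R : comPzRingType) (u1 u2 z1 z2 w : R) :
  z2 * u1 - z1 * u2 = 0 -> w * (z1 ^+ 2 + z2 ^+ 2) = 1 ->
  exists k, u1 = k * z1 /\ u2 = k * z2.
Proof.
move=> cross zw1; exists (w * (u1 * z1 + u2 * z2)).
split; apply/eqP; rewrite -subr_eq0; apply/eqP.
  rewrite -[u1 in u1 - _]mulr1 -zw1 (_ : _ - _ = w * z2 * (z2 * u1 - z1 * u2)); last by ring.
  by rewrite cross mulr0.
rewrite -[u2 in u2 - _]mulr1 -zw1 (_ : _ - _ = - (w * z1) * (z2 * u1 - z1 * u2)); last by ring.
by rewrite cross mulr0.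
Qed.

Lemma orthogonal_multiple (F : fieldType) (al be x y : F) :
  al != 0 \/ be != 0 -> al * x + be * y = 0 -> exists t, x = - be * t /\ y = al * t.
Proof.
move=> ab0 ortho; have [al0|al_neq0] := eqVneq al 0.
  have be_neq0 : be != 0 by case: ab0; rewrite ?al0 ?eqxx.
  exists (- x / be); split; first by field.
  move/eqP: ortho; rewrite al0 mul0r add0r mulf_eq0 (negbTE be_neq0).
  by move=> /eqP ->; rewrite mul0r.
exists (y / al); split; last by field.
by apply/eqP; rewrite -(can_eq (mulKf al_neq0)) -subr_eq0 -ortho; apply/eqP; field.
Qed.

Section ParametrizedPolynomials.
Variable K : closedFieldType.

Inductive param_poly : (pt K -> K -> K) -> Prop :=
| param_polyC h : poly_fun h -> param_poly (fun p _ => h p)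
| param_polyX : param_poly (fun _ s => s)
| param_polyD E1 E2 : param_poly E1 -> param_poly E2 ->
    param_poly (fun p s => E1 p s + E2 p s)
| param_polyM E1 E2 : param_poly E1 -> param_poly E2 ->
    param_poly (fun p s => E1 p s * E2 p s)
| param_poly_ext E1 E2 : param_poly E1 -> (forall p s, E1 p s = E2 p s) ->
    param_poly E2.

Lemma param_poly_horner (c : {poly K}) X : param_poly X ->
  param_poly (fun p s => c.[X p s]).
Proof.
move=> PX; elim/poly_ind: c => [|c k IH].
  by apply: param_poly_ext (param_polyC (poly_fun_const 0)) _ => p s; rewrite horner0.
apply: param_poly_ext (param_polyD (param_polyM IH PX) (param_polyC (poly_fun_const k))) _.
by move=> p s; rewrite hornerMXaddC.
Qed.

Lemma param_poly_ev2 g X1 X2 : param_poly X1 -> param_poly X2 ->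
  param_poly (fun p s => ev2 g (X1 p s, X2 p s)).
Proof.
move=> PX1 PX2; elim/poly_ind: g => [|g c IH].
  by apply: param_poly_ext (param_polyC (poly_fun_const 0)) _ => p s; rewrite /ev2 !horner0.
apply: param_poly_ext (param_polyD (param_polyM IH PX2) (param_poly_horner c PX1)) _.
by move=> p s; rewrite ev2MXaddC.
Qed.

Lemma param_poly_even_odd H : param_poly H -> exists E O,
  [/\ param_poly E, param_poly O & forall p s, H p s = E p (s ^+ 2) + s * O p (s ^+ 2)].
Proof.
have P0 := param_polyC (poly_fun_const 0); have P1 := param_polyC (poly_fun_const 1).
elim=> {H} [h Ph | | H1 H2 _ [E1 [O1 [PE1 PO1 e1]]] _ [E2 [O2 [PE2 PO2 e2]]]
           | H1 H2 _ [E1 [O1 [PE1 PO1 e1]]] _ [E2 [O2 [PE2 PO2 e2]]]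
           | H1 H2 _ [E [O [PE PO e]]] e12].
- exists (fun p _ => h p), (fun _ _ => 0); split => [||p s]; first exact: param_polyC.
    exact: P0.
  by rewrite mulr0 addr0.
- exists (fun _ _ => 0), (fun _ _ => 1); split => [||p s] //.
  by rewrite mulr1 add0r.
- exists (fun p t => E1 p t + E2 p t), (fun p t => O1 p t + O2 p t).
  by split => [||p s]; [exact: param_polyD | exact: param_polyD | rewrite e1 e2; ring].
- exists (fun p t => E1 p t * E2 p t + t * (O1 p t * O2 p t)),
         (fun p t => E1 p t * O2 p t + O1 p t * E2 p t).
  split => [||p s]; last by rewrite e1 e2; ring.
    exact: param_polyD (param_polyM PE1 PE2) (param_polyM param_polyX (param_polyM PO1 PO2)).
  exact: param_polyD (param_polyM PE1 PO2) (param_polyM PO1 PE2).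
- by exists E, O; split => // p s; rewrite -e12.
Qed.

Lemma param_poly_clear_denominator (N : pt K -> K) E : poly_fun N -> param_poly E ->
  exists n0, forall n, (n0 <= n)%N -> exists g, forall p, N p != 0 ->
    N p ^+ n * E p (N p)^-1 = ev2 g p.
Proof.
move=> PN; elim=> {E} [h Ph | | E1 E2 _ [n1 h1] _ [n2 h2] | E1 E2 _ [n1 h1] _ [n2 h2]
                    | E1 E2 _ [n0 h] e12].
- exists 0%N => n _; have [g eg] := poly_fun_mul (poly_fun_exp n PN) Ph.
  by exists g => p _; exact: eg.
- exists 1%N => -[//|n] _; have [g eg] := poly_fun_exp n PN.
  by exists g => p Np0; rewrite exprSr -mulrA mulfV // mulr1 eg.
- exists (maxn n1 n2) => n; rewrite geq_max => /andP[le1 le2].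
  have [g1 eg1] := h1 n le1; have [g2 eg2] := h2 n le2.
  by exists (g1 + g2) => p Np0; rewrite ev2D -eg1 // -eg2 // mulrDr.
- exists (n1 + n2)%N => n le12; have [g1 eg1] := h1 n1 (leqnn _).
  have le1 : (n1 <= n)%N := leq_trans (leq_addr _ _) le12.
  have [|g2 eg2] := h2 (n - n1)%N; first by rewrite leq_subRL.
  by exists (g1 * g2) => p Np0; rewrite ev2M -eg1 // -eg2 // mulrACA -exprD subnKC.
- by exists n0 => n le0; have [g eg] := h n le0; exists g => p Np0; rewrite -e12 eg.
Qed.

End ParametrizedPolynomials.

Section ZariskiClosure.
Variable K : closedFieldType.
Implicit Types S : pt K -> Prop.

Lemma zcl_sub S : subset_pt S (zcl S).
Proof. by move=> p Sp g gS; apply: gS. Qed.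

Lemma zcl_closed S : zclosed (zcl S).
Proof. by move=> p Sp g gS; apply: Sp => q; apply; apply: gS. Qed.

Lemma zero_set_closed (g : {poly {poly K}}) : zclosed (fun p => ev2 g p = 0).
Proof. by move=> p; apply. Qed.

Lemma not_subset_ptP S T : ~ subset_pt S T -> exists p, S p /\ ~ T p.
Proof.
move=> ST; apply: NNPP => no_p; apply: ST => p Sp; apply: NNPP => Tp.
by apply: no_p; exists p.
Qed.

Lemma not_zclP S p : ~ zcl S p ->
  exists g, (forall q, S q -> ev2 g q = 0) /\ ev2 g p != 0.
Proof.
move=> Sp; apply: NNPP => no_g; apply: Sp => g gS; apply: NNPP => gp.
by apply: no_g; exists g; split => //; apply/eqP.
Qed.

Lemma zcl_nonvanishing_dense S (G : {poly {poly K}}) : irreducible_set (zcl S) ->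
  (exists Q, S Q /\ ev2 G Q != 0) ->
  subset_pt (zcl S) (zcl (fun Q => S Q /\ ev2 G Q != 0)).
Proof.
move=> [_ [_ Sirr]] [Q0 [SQ0 GQ0]].
pose Om Q := S Q /\ ev2 G Q != 0.
have cover Q : zcl S Q -> ev2 G Q = 0 \/ zcl Om Q.
  move=> SQ; have [GQ|GQ] := eqVneq (ev2 G Q) 0; [left | right] => // g gOm.
  have : ev2 (g * G) Q = 0.
    apply: SQ => q Sq; rewrite ev2M.
    by have [->|Gq] := eqVneq (ev2 G q) 0; [rewrite mulr0 | rewrite gOm ?mul0r].
  by rewrite ev2M => /eqP; rewrite mulf_eq0 (negbTE GQ) orbF => /eqP.
have [SG|//] := Sirr _ (zcl Om) (zero_set_closed (g := G)) (zcl_closed (S := Om)) cover.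
by move: GQ0; rewrite SG ?eqxx //; exact: zcl_sub.
Qed.

End ZariskiClosure.

Section LinesThroughPoint.
Variable K : closedFieldType.
Hypothesis K0 : [pchar K] =i pred0.
Variables a b : K.

Definition line_pt (v1 v2 l : K) : pt K := (a + l * v1, b + l * v2).

Definition sqdistA (p : pt K) := (p.1 - a) ^+ 2 + (p.2 - b) ^+ 2.

Section UnitDirection.
Variables v1 v2 : K.
Hypothesis v_unit : v1 ^+ 2 + v2 ^+ 2 = 1.

Lemma unit_vec_neq0 : v1 != 0 \/ v2 != 0.
Proof.
have [v10|] := eqVneq v1 0; last by left.
right; apply: contra_eq_neq v_unit => v20.
by rewrite v10 v20 expr0n addr0 eq_sym oner_eq0.
Qed.

Lemma sqdistA_line_pt l : sqdistA (line_pt v1 v2 l) = l ^+ 2.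
Proof. by rewrite /sqdistA /= -[RHS]mulr1 -v_unit; ring. Qed.

Lemma line_pt_dot l :
  ((line_pt v1 v2 l).1 - a) * v1 + ((line_pt v1 v2 l).2 - b) * v2 = l.
Proof. by rewrite /= -[RHS]mulr1 -v_unit; ring. Qed.

Lemma line_pt_inj : injective (line_pt v1 v2).
Proof. by move=> l l' e; rewrite -(line_pt_dot l) -(line_pt_dot l') e. Qed.

Lemma line_pt_of_cross0 p : (p.1 - a) * v2 - (p.2 - b) * v1 = 0 ->
  p = line_pt v1 v2 ((p.1 - a) * v1 + (p.2 - b) * v2).
Proof.
case: p => x y /= cross; congr (_, _); apply/eqP; rewrite -subr_eq0; apply/eqP.
  rewrite (_ : x - (a + _) = v2 * ((x - a) * v2 - (y - b) * v1) +
                       (x - a) * (1 - (v1 ^+ 2 + v2 ^+ 2))); last by ring.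
  by rewrite cross v_unit subrr !mulr0 addr0.
rewrite (_ : y - (b + _) = - v1 * ((x - a) * v2 - (y - b) * v1) +
                     (y - b) * (1 - (v1 ^+ 2 + v2 ^+ 2))); last by ring.
by rewrite cross v_unit subrr !mulr0 addr0.
Qed.

End UnitDirection.

Lemma ev2_line g v1 v2 :
  exists r : {poly K}, forall l, ev2 g (line_pt v1 v2 l) = r.[l].
Proof.
have [r er] := ev2_along g (a%:P + 'X * v1%:P) (b%:P + 'X * v2%:P).
by exists r => l; rewrite -er !hornerE.
Qed.

Lemma irreducible_line X v1 v2 : zclosed X ->
  (forall p, X p <-> exists l, p = line_pt v1 v2 l) -> irreducible_set X.
Proof.
move=> Xcl XL; split=> //; split; first by exists (line_pt v1 v2 0); apply/XL; exists 0.
move=> Z1 Z2 Z1cl Z2cl cover; apply: NNPP => /(not_or_and _ _)[XZ1 XZ2].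
have [p1 [Xp1 Z1p1]] := not_subset_ptP XZ1; have [p2 [Xp2 Z2p2]] := not_subset_ptP XZ2.
have [g1 [g1Z1 g1p1]] := not_zclP (fun Z => Z1p1 (Z1cl _ Z)).
have [g2 [g2Z2 g2p2]] := not_zclP (fun Z => Z2p2 (Z2cl _ Z)).
have [r1 er1] := ev2_line g1 v1 v2; have [r2 er2] := ev2_line g2 v1 v2.
have : r1 * r2 = 0.
  apply: (poly_eq0_of_inj_roots (natr_inj K0)) => k; rewrite hornerM -er1 -er2.
  have Xk : X (line_pt v1 v2 k%:R) by apply/XL; exists k%:R.
  by have [/g1Z1 -> | /g2Z2 ->] := cover _ Xk; rewrite ?mul0r ?mulr0.
move/eqP; rewrite mulf_eq0 => /orP[] /eqP r0.
  by have [l el] := (XL _).1 Xp1; move: g1p1; rewrite el er1 r0 horner0 eqxx.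
by have [l el] := (XL _).1 Xp2; move: g2p2; rewrite el er2 r0 horner0 eqxx.
Qed.

Variable f : {poly {poly K}}.
Hypothesis f_irr : irreducible_elt f.

Lemma unit_direction_of_line_through : is_line_through f a b -> (exists p, C0 f a b p) ->
  exists v1 v2, v1 ^+ 2 + v2 ^+ 2 = 1 /\
    forall p, curve f p <-> exists l, p = line_pt v1 v2 l.
Proof.
move=> [al [be [ga [ab0 [Aon fL]]]]] [p0 [fp0 Np0]].
have curveE p : curve f p <-> al * (p.1 - a) + be * (p.2 - b) = 0.
  rewrite fL (_ : _ + ga = al * (p.1 - a) + be * (p.2 - b) + (al * a + be * b + ga)).
    by rewrite Aon addr0.
  by ring.
have [t0 [x0E y0E]] := orthogonal_multiple ab0 ((curveE p0).1 fp0).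
have ab2 : al ^+ 2 + be ^+ 2 != 0.
  apply: contra_neq Np0 => ab2; rewrite x0E y0E.
  rewrite (_ : _ + _ = t0 ^+ 2 * (al ^+ 2 + be ^+ 2)); last by ring.
  by rewrite ab2 mulr0.
have [nu nu2] := exists_sqrt (al ^+ 2 + be ^+ 2).
have nu0 : nu != 0 by apply: contra_neq ab2 => nu0; rewrite -nu2 nu0 expr0n.
have v_unit : (- be / nu) ^+ 2 + (al / nu) ^+ 2 = 1.
  rewrite (_ : _ + _ = (al ^+ 2 + be ^+ 2) / nu ^+ 2); last by field.
  by rewrite -nu2 divff // expf_neq0.
exists (- be / nu), (al / nu); split => // p; rewrite curveE.
have -> : al * (p.1 - a) + be * (p.2 - b) =
    nu * ((p.1 - a) * (al / nu) - (p.2 - b) * (- be / nu)) by field.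
split => [/eqP | [l ->]]; last by rewrite /=; field.
rewrite mulf_eq0 (negbTE nu0) => /eqP/(line_pt_of_cross0 v_unit) pE.
by exists ((p.1 - a) * (- be / nu) + (p.2 - b) * (al / nu)).
Qed.

Lemma curve_factorE q l : f = q * l -> l \isn't a GRing.unit ->
  forall p, curve f p <-> ev2 l p = 0.
Proof.
move=> fql lNU p; have [_ [_ f_irr']] := f_irr.
have qU : q \is a GRing.unit by case: (f_irr' q l fql) => // lU; rewrite lU in lNU.
rewrite /curve fql ev2M; split => [|->]; last by rewrite mulr0.
by move/eqP; rewrite mulf_eq0 (negbTE (ev2_unit_neq0 p qU)) => /eqP.
Qed.

Lemma line_through_of_vertical_vanishing :
  (forall y, ev2 f (a, y) = 0) -> is_line_through f a b.
Proof.
move=> fa0; pose fa := map_poly (horner_eval a) f.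
have fa_eq0 : fa = 0.
  apply: (poly_eq0_of_inj_roots (natr_inj K0)) => k; rewrite -(fa0 k%:R).
  by have := horner_map (horner_eval a) f k%:R%:P; rewrite /= !horner_evalE hornerC.
have coef_root i : root f`_i a.
  by apply/rootP; have := congr1 (fun r : {poly K} => r`_i) fa_eq0; rewrite coef_map coef0.
pose q := \poly_(i < size f) (f`_i %/ ('X - a%:P)).
have fq : f = q * ('X - a%:P)%:P.
  apply/polyP => i; rewrite coefMC coef_poly; case: ltnP => [_|le_f_i].
    by rewrite divpK // -root_factor_theorem.
  by rewrite nth_default // mul0r.
have lNU : ('X - a%:P)%:P \isn't a GRing.unit.
  by rewrite poly_unitE size_polyC polyXsubC_eq0 /= coefC /= poly_unitE size_XsubC.
exists 1, 0, (- a); split; first by left; exact: oner_neq0.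
split => [|p]; first by ring.
by rewrite (curve_factorE fq lNU) /ev2 hornerC hornerXsubC mul1r mul0r addr0.
Qed.

Lemma line_through_of_graph_vanishing s :
  (forall x, ev2 f (x, s * (x - a) + b) = 0) -> is_line_through f a b.
Proof.
move=> fc0; pose c : {poly K} := s%:P * ('X - a%:P) + b%:P.
have cE x : c.[x] = s * (x - a) + b by rewrite !hornerE.
have [q fq] : exists q, f = q * ('X - c%:P).
  apply/factor_theorem/rootP/(poly_eq0_of_inj_roots (natr_inj K0)) => k.
  by rewrite -ev2_graph cE.
have lNU : ('X - c%:P) \isn't a GRing.unit by rewrite poly_unitE size_XsubC.
exists (- s), 1, (s * a - b); split; first by right; exact: oner_neq0.
split => [|p]; first by ring.
rewrite (curve_factorE fq lNU) /ev2 hornerXsubC hornerD hornerN hornerC cE.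
by split => /eqP; rewrite -subr_eq0 => /eqP <-; ring.
Qed.

Lemma line_through_of_line_vanishing v1 v2 : v1 != 0 \/ v2 != 0 ->
  (forall l, ev2 f (line_pt v1 v2 l) = 0) -> is_line_through f a b.
Proof.
move=> v_neq0 fL; have [v10|v1_neq0] := eqVneq v1 0.
  have v2_neq0 : v2 != 0 by case: v_neq0; rewrite ?v10 ?eqxx.
  apply: line_through_of_vertical_vanishing => y.
  by rewrite -(fL ((y - b) / v2)) /line_pt v10; congr (ev2 f (_, _)); field.
apply: (line_through_of_graph_vanishing (s := v2 / v1)) => x.
by rewrite -(fL ((x - a) / v1)); congr (ev2 f (_, _)); field.
Qed.

Lemma line_through_of_progression v1 v2 l0 e : v1 != 0 \/ v2 != 0 -> e != 0 ->
  (forall k : nat, ev2 f (line_pt v1 v2 (l0 + k%:R * e)) = 0) -> is_line_through f a b.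
Proof.
move=> v_neq0 e0 fk; have [r er] := ev2_line f v1 v2.
have r0 : r = 0.
  apply: (poly_eq0_of_inj_roots (z := fun k : nat => l0 + k%:R * e)) => [m n /= | k].
    by move/addrI/(mulIf e0)/natr_inj; apply.
  by rewrite -er fk.
by apply: (line_through_of_line_vanishing v_neq0) => l; rewrite er r0 horner0.
Qed.

End LinesThroughPoint.

Section Conchoid.
Variable K : closedFieldType.
Hypothesis K0 : [pchar K] =i pred0.
Variables (f : {poly {poly K}}) (a b d : K).
Hypothesis d_neq0 : d != 0.

Definition homothety (p : pt K) (s : K) : pt K :=
  (p.1 + s * d * (p.1 - a), p.2 + s * d * (p.2 - b)).

Definition conchoid_base (Q : pt K) := exists y w, Bset f a b d Q y w.

Lemma homothety_line_pt v1 v2 m eps :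
  homothety (line_pt a b v1 v2 m) eps = line_pt a b v1 v2 (m + eps * d * m).
Proof. by rewrite /homothety /=; congr (_, _); ring. Qed.

Lemma Bset_line_pt v1 v2 l m : v1 ^+ 2 + v2 ^+ 2 = 1 ->
  ev2 f (line_pt a b v1 v2 l) = 0 -> l != 0 -> (m - l) ^+ 2 = d ^+ 2 ->
  Bset f a b d (line_pt a b v1 v2 m) (line_pt a b v1 v2 l) (l ^+ 2)^-1.
Proof.
move=> v_unit fl l0 ml; split => //=; split.
  by rewrite -ml -[RHS]mulr1 -v_unit; ring.
split; first by ring.
have := sqdistA_line_pt a b v_unit l; rewrite /sqdistA /= => ->.
by rewrite mulVf // expf_neq0.
Qed.

Lemma Bset_homothety Q y w mu : Bset f a b d Q y w ->
  mu ^+ 2 = sqdistA a b Q -> mu != 0 ->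
  exists2 eps, eps = mu^-1 \/ eps = - mu^-1 & y = homothety Q eps.
Proof.
case: Q y => [x1 x2] [y1 y2] [_]; rewrite /= => -[dist [cross yw1]] mu2 mu0.
have [k [e1 e2]] := parallel_multiple cross yw1.
have {e1}x1E : x1 = y1 + k * (y1 - a) by rewrite -e1; ring.
have {e2}x2E : x2 = y2 + k * (y2 - b) by rewrite -e2; ring.
subst x1 x2.
have [eps eps_pm eps_k] : exists2 eps, eps = mu^-1 \/ eps = - mu^-1 &
    eps * d * (1 + k) = - k.
  have : (k * mu) ^+ 2 == (d * (1 + k)) ^+ 2.
    by rewrite exprMn mu2 exprMn -dist /sqdistA /=; apply/eqP; ring.
  rewrite eqf_sqr => /orP[] /eqP kmu.
    by exists (- mu^-1); [right | rewrite -mulrA -kmu; field].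
  by exists mu^-1; [left | rewrite -mulrA -[d * _]opprK -kmu; field].
exists eps => //; rewrite /homothety /=.
have shift u c : u = u + k * (u - c) + eps * d * (u + k * (u - c) - c).
  transitivity (u + (k + eps * d * (1 + k)) * (u - c)); last by ring.
  by rewrite eps_k subrr mul0r addr0.
by rewrite -!shift.
Qed.

(* On [conchoid_base], where one of the two candidate preimages [homothety p (1/mu)],
   [homothety p (-1/mu)] lies on the curve, [G] vanishes exactly when both do. *)
Definition parity_certificate (G : {poly {poly K}}) :=
  (forall p, sqdistA a b p = 0 -> ev2 G p = 0) /\
  forall p mu, mu ^+ 2 = sqdistA a b p -> mu != 0 ->
    (ev2 G p == 0) = (ev2 f (homothety p mu^-1) + ev2 f (homothety p (- mu^-1)) == 0).

Lemma poly_fun_sqdistA : poly_fun (sqdistA a b).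
Proof.
by apply: poly_fun_add; apply: poly_fun_exp; apply: poly_fun_add;
  [exact: poly_fun_fst | exact: poly_fun_const | exact: poly_fun_snd | exact: poly_fun_const].
Qed.

Lemma exists_parity_certificate : exists G, parity_certificate G.
Proof.
have coord (pr : pt K -> K) c :
    poly_fun pr -> param_poly (fun p s => pr p + s * d * (pr p - c)).
  move=> Ppr; have Psd : param_poly (fun _ s => s * d).
    exact (param_polyM (param_polyX K) (param_polyC (poly_fun_const d))).
  have Pc : param_poly (fun p _ => pr p - c).
    exact (param_polyC (poly_fun_add Ppr (poly_fun_const (- c)))).
  exact (param_polyD (param_polyC Ppr) (param_polyM Psd Pc)).
have Pf := param_poly_ev2 f (coord _ a (poly_fun_fst K)) (coord _ b (poly_fun_snd K)).
(* [G] is [sqdistA p ^+ n0.+1 * E p (1 / sqdistA p)], where [E] is the even part. *)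
have [E [O [PE _ fEO]]] := param_poly_even_odd Pf.
have [n0 clear] := param_poly_clear_denominator poly_fun_sqdistA PE.
have [g eg] := clear n0 (leqnn _); have [gN egN] := poly_fun_sqdistA.
exists (gN * g); split => [p Np0 | p mu mu2 mu0]; first by rewrite ev2M -egN Np0 mul0r.
have Np0 : sqdistA a b p != 0 by rewrite -mu2 expf_neq0.
rewrite ev2M -egN -eg // !fEO sqrrN exprVn mu2.
rewrite (_ : _ + _ = 2 * E p (sqdistA a b p)^-1); last by ring.
by rewrite !mulf_eq0 (negbTE Np0) expf_eq0 (negbTE Np0) andbF (negbTE (two_neq0 K0)).
Qed.

Lemma fiber_unique G Q y y' : parity_certificate G -> ev2 G Q != 0 ->
  fiber f a b d Q y -> fiber f a b d Q y' -> y = y'.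
Proof.
move=> [G0 Gpar] GQ [w B] [w' B'].
have NQ : sqdistA a b Q != 0 by apply: contra_neq GQ => /G0.
have [mu mu2] := exists_sqrt (sqdistA a b Q).
have mu0 : mu != 0 by apply: contra_neq NQ => mu0; rewrite -mu2 mu0 expr0n.
have [eps eps_pm yE] := Bset_homothety B mu2 mu0.
have [eps' eps'_pm y'E] := Bset_homothety B' mu2 mu0.
have [fy fy'] := (B.1, B'.1); subst y y'.
have no_two_roots :
    ev2 f (homothety Q mu^-1) = 0 -> ev2 f (homothety Q (- mu^-1)) = 0 -> False.
  by move=> r1 r2; move: GQ; rewrite (Gpar _ _ mu2 mu0) r1 r2 addr0 eqxx.
case: eps_pm eps'_pm fy fy' => -> [] -> // fy fy'; exfalso.
  exact: no_two_roots fy fy'.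
exact: no_two_roots fy' fy.
Qed.

Lemma certificate_vanishes_of_special G : parity_certificate G ->
  irreducible_set (conchoid f a b d) -> special_component f a b d (conchoid f a b d) ->
  forall Q, conchoid_base Q -> ev2 G Q = 0.
Proof.
move=> cert irr [Xcomp not_simple] Q BQ; apply/eqP; apply: contraT => GQ; exfalso.
apply: not_simple; split => //; exists (fun Q => conchoid_base Q /\ ev2 G Q != 0).
split; first by move=> q [Bq _]; exact: zcl_sub.
split; first by exists Q.
split; first exact: zcl_nonvanishing_dense irr (ex_intro _ Q (conj BQ GQ)).
move=> q [[y [w B]] Gq]; exists y; split; first by exists w.
by move=> y' By'; apply: fiber_unique cert Gq By' _; exists w.
Qed.

Lemma certificate_step G v1 v2 l : parity_certificate G ->
  (forall Q, conchoid_base Q -> ev2 G Q = 0) -> v1 ^+ 2 + v2 ^+ 2 = 1 ->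
  l != 0 -> l + d != 0 -> ev2 f (line_pt a b v1 v2 l) = 0 ->
  ev2 f (line_pt a b v1 v2 (l + 2 * d)) = 0.
Proof.
move=> [_ Gpar] GB v_unit l0 ld fl.
have BQ : conchoid_base (line_pt a b v1 v2 (l + d)).
  by exists (line_pt a b v1 v2 l), (l ^+ 2)^-1; apply: Bset_line_pt => //; ring.
have := Gpar _ _ (esym (sqdistA_line_pt a b v_unit (l + d))) ld.
rewrite GB // eqxx !homothety_line_pt => /esym/eqP.
have -> : l + d + - (l + d)^-1 * d * (l + d) = l by field.
by rewrite fl addr0 (_ : _ + _ * _ = l + 2 * d) //; field.
Qed.

Lemma line_through_of_certificate G v1 v2 l0 : irreducible_elt f ->
  parity_certificate G -> (forall Q, conchoid_base Q -> ev2 G Q = 0) ->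
  v1 ^+ 2 + v2 ^+ 2 = 1 -> ev2 f (line_pt a b v1 v2 l0) = 0 ->
  (forall m : nat, l0 + m%:R * d != 0) -> is_line_through f a b.
Proof.
move=> f_irr cert GB v_unit fl0 l0m.
have two_d : 2 * d != 0 by rewrite mulf_neq0 ?two_neq0.
apply: (line_through_of_progression K0 f_irr (l0 := l0) (unit_vec_neq0 v_unit) two_d) => k.
elim: k => [|k IH]; first by rewrite mul0r addr0.
rewrite (_ : _ + _ = l0 + k%:R * (2 * d) + 2 * d); last by rewrite -[k.+1%:R]natr1; ring.
have evenE : l0 + k%:R * (2 * d) = l0 + (k * 2)%N%:R * d by rewrite natrM; ring.
have oddE : l0 + k%:R * (2 * d) + d = l0 + (k * 2).+1%:R * d.
  by rewrite -[(k * 2).+1%:R]natr1 natrM; ring.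
apply: certificate_step cert GB v_unit _ _ IH; [rewrite evenE | rewrite oddE]; exact: l0m.
Qed.

Lemma line_through_of_special : irreducible_elt f ->
  irreducible_set (conchoid f a b d) -> special_component f a b d (conchoid f a b d) ->
  (exists p, C0 f a b p) -> is_line_through f a b.
Proof.
move=> f_irr irr special [p0 [fp0 Np0]].
have [G cert] := exists_parity_certificate.
have GB := certificate_vanishes_of_special cert irr special.
have [nu nu2] := exists_sqrt (sqdistA a b p0).
have nu0 : nu != 0.
  by apply: contra_neq Np0 => nu0; rewrite -[_ + _]/(sqdistA a b p0) -nu2 nu0 expr0n.
pose v1 := (p0.1 - a) / nu; pose v2 := (p0.2 - b) / nu.
have v_unit : v1 ^+ 2 + v2 ^+ 2 = 1.
  rewrite (_ : _ + _ = sqdistA a b p0 / nu ^+ 2); last by rewrite /v1 /v2 /sqdistA; field.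
  by rewrite -nu2 divff // expf_neq0.
have p0E : line_pt a b v1 v2 nu = p0.
  by rewrite /line_pt /v1 /v2 !(mulrC nu) !divfK // !subrKC -surjective_pairing.
have [nu_m | nu_m] := nat_shift_neq0 K0 nu0 d_neq0.
  by apply: line_through_of_certificate f_irr cert GB v_unit _ nu_m; rewrite p0E.
have v_unitN : (- v1) ^+ 2 + (- v2) ^+ 2 = 1 by rewrite !sqrrN.
apply: line_through_of_certificate f_irr cert GB v_unitN _ nu_m.
by rewrite /line_pt !mulrNN -/(line_pt a b v1 v2 nu) p0E.
Qed.

Section ThroughLine.
Variables v1 v2 : K.
Hypothesis v_unit : v1 ^+ 2 + v2 ^+ 2 = 1.
Hypothesis curve_line : forall p, curve f p <-> exists l, p = line_pt a b v1 v2 l.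

Lemma conchoid_base_curve Q : conchoid_base Q -> curve f Q.
Proof.
move=> [y [w [fy [_ [cross yw1]]]]]; have [l yE] := (curve_line y).1 fy; subst y.
have l0 : l != 0.
  apply: contra_eq_neq yw1 => ->; rewrite /= !mul0r !addr0 !subrr expr0n addr0 mulr0.
  by rewrite eq_sym oner_eq0.
have : l * ((Q.1 - a) * v2 - (Q.2 - b) * v1) = 0 by rewrite -cross /=; ring.
move/eqP; rewrite mulf_eq0 (negbTE l0) => /eqP/(line_pt_of_cross0 v_unit) QE.
by apply/curve_line; eexists; exact: QE.
Qed.

Lemma conchoid_lineE p : conchoid f a b d p <-> curve f p.
Proof.
split=> [Xp | /curve_line [l ->] g gB]; first exact: Xp _ conchoid_base_curve.
have [r er] := ev2_line a b g v1 v2.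
suff r0 : r = 0 by rewrite er r0 horner0.
apply: (poly_eq0_of_inj_roots (z := fun k : nat => k.+1%:R + d)).
  by move=> m n /= /addIr /(natr_inj K0) [].
move=> k; rewrite -er; apply: gB.
exists (line_pt a b v1 v2 k.+1%:R), (k.+1%:R ^+ 2)^-1; apply: Bset_line_pt => //.
- by apply/curve_line; exists k.+1%:R.
- by rewrite ((pcharf0P K).1 K0).
- by rewrite addrAC subrr add0r.
Qed.

Lemma irreducible_conchoid_line : irreducible_set (conchoid f a b d).
Proof.
apply: (irreducible_line K0 (zcl_closed (S := conchoid_base))) => p.
exact: iff_trans (conchoid_lineE p) (curve_line p).
Qed.

Lemma conchoid_line_not_simple : ~ simple_component f a b d (conchoid f a b d).
Proof.
move=> [_ [Om [OmX [_ [dense fiber1]]]]].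
have Pdot : poly_fun (fun p : pt K => (p.1 - a) * v1 + (p.2 - b) * v2).
  have Pfst := poly_fun_add (poly_fun_fst K) (poly_fun_const (- a)).
  have Psnd := poly_fun_add (poly_fun_snd K) (poly_fun_const (- b)).
  exact (poly_fun_add (poly_fun_mul Pfst (poly_fun_const v1))
                      (poly_fun_mul Psnd (poly_fun_const v2))).
have [g eg] := poly_fun_add (poly_fun_exp 2 Pdot) (poly_fun_const (- d ^+ 2)).
have gOm Q : Om Q -> ev2 g Q = 0.
  move=> OmQ; have [mu QE] := (curve_line Q).1 ((conchoid_lineE Q).1 (OmX _ OmQ)).
  rewrite -eg QE line_pt_dot //; apply/eqP; rewrite subr_eq0 eqf_sqr.
  apply: contraT; rewrite negb_or => /andP[mu_d mu_Nd]; exfalso.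
  have [y [_ y_uniq]] := fiber1 Q OmQ.
  have fib l : l != 0 -> (mu - l) ^+ 2 = d ^+ 2 -> line_pt a b v1 v2 l = y.
    move=> l0 ml; apply: y_uniq; rewrite QE; exists (l ^+ 2)^-1.
    by apply: Bset_line_pt => //; apply/curve_line; exists l.
  have md0 : mu - d != 0 by rewrite subr_eq0.
  have mpd0 : mu + d != 0 by rewrite -[d]opprK subr_eq0.
  have y1 : line_pt a b v1 v2 (mu - d) = y by apply: fib md0 _; ring.
  have y2 : line_pt a b v1 v2 (mu + d) = y by apply: fib mpd0 _; ring.
  move/(line_pt_inj v_unit)/addrI/eqP: (etrans y1 (esym y2)).
  rewrite eq_sym -subr_eq0 opprK -mulr2n -mulr_natl.
  by rewrite mulf_eq0 (negbTE (two_neq0 K0)) (negbTE d_neq0).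
have A_conchoid : conchoid f a b d (a, b).
  by apply/conchoid_lineE/curve_line; exists 0; rewrite /line_pt !mul0r !addr0.
have := dense _ A_conchoid g gOm; rewrite -eg /= !subrr !mul0r addr0 expr0n sub0r.
by move/eqP; rewrite oppr_eq0 expf_eq0 (negbTE d_neq0) andbF.
Qed.

End ThroughLine.

End Conchoid.

Theorem corollary2 (K : closedFieldType) (f : {poly {poly K}}) (a b d : K) :
  [pchar K] =i pred0 ->
  irreducible_elt f ->
  d != 0 ->
  (exists p, C0 f a b p) ->
  ~ is_circle_centered f a b ->
  (irreducible_set (conchoid f a b d) /\
   special_component f a b d (conchoid f a b d))
  <-> is_line_through f a b.
Proof.
move=> K0 f_irr d0 C0_neq0 _; split => [[irr special] | line].
  exact (line_through_of_special K0 d0 f_irr irr special C0_neq0).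
have [v1 [v2 [v_unit curve_line]]] := unit_direction_of_line_through line C0_neq0.
have irr := irreducible_conchoid_line K0 d v_unit curve_line.
split => //; split; last exact (conchoid_line_not_simple K0 d0 v_unit curve_line).
by split => //; split => // N _ _ NX.
Qed.
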